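(* Let $H$ be a weak Hopf algebra, $\pi\colon H\to A$ a partial representation, $w\in H_s$ and $z\in H_t$. Then for all $h\in H$: (1) $\pi(w)\pi(h)=\pi(wh)$; (2) $\pi(h)\pi(z)=\pi(hz)$; (3) $\pi(z)\pi(h)=\pi(zh)$; (4) $\pi(h)\pi(w)=\pi(hw)$.
   Context: All algebras are associative and unital over a field $\Bbbk$; Sweedler notation $\Delta(h)=h_1\otimes h_2$, $\Delta(1_H)=1_1\otimes1_2$. A weak Hopf algebra is $(H,m,u,\Delta,\varepsilon,S)$ with $H$ an algebra, $(H,\Delta,\varepsilon)$ a coalgebra, and for all $g,h,k$: $\Delta(kh)=\Delta(k)\Delta(h)$; $\varepsilon(kh_1)\varepsilon(h_2g)=\varepsilon(khg)=\varepsilon(kh_2)\varepsilon(h_1g)$; $(1\otimes\Delta(1))(\Delta(1)\otimes1)=\Delta^2(1)=(\Delta(1)\otimes1)(1\otimes\Delta(1))$; $h_1S(h_2)=\varepsilon_t(h)$; $S(h_1)h_2=\varepsilon_s(h)$; $S(h)=S(h_1)h_2S(h_3)$, where $\varepsilon_t(h)=\varepsilon(1_1h)1_2$, $\varepsilon_s(h)=1_1\varepsilon(h1_2)$; $H_t=\varepsilon_t(H)$, $H_s=\varepsilon_s(H)$. A partial representation of $H$ in $A$ is a linear $\pi\colon H\to A$ with, for all $h,k$: (PR1) $\pi(1_H)=1_A$; (PR2) $\pi(h)\pi(k_1)\pi(S(k_2))=\pi(hk_1)\pi(S(k_2))$; (PR3) $\pi(h)\pi(S(k_1))\pi(k_2)=\pi(hS(k_1))\pi(k_2)$;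 (PR4) $\pi(h_1)\pi(S(h_2))\pi(k)=\pi(h_1)\pi(S(h_2)k)$; (PR5) $\pi(S(h_1))\pi(h_2)\pi(k)=\pi(S(h_1))\pi(h_2k)$; (PR6) $\pi(h)=\pi(h_1)\pi(S(h_2))\pi(h_3)$. *)

(* Weak Hopf algebras over a field, with the coproduct
   represented by a list of simple tensors and tensor equalities expressed
   through the universal property of the tensor product (all bi/trilinear maps). *)
From HB Require Import structures.
From mathcomp Require Import all_boot all_order all_algebra.
Set Implicit Arguments. Unset Strict Implicit. Unset Printing Implicit Defensive.
Import GRing.Theory.
Local Open Scope ring_scope.

Section WHA.
Variables (k : fieldType) (H : algType k).

Definition bilinear_map (M : lmodType k) (b : H -> H -> M) : Prop :=
  (forall x, linear (b x)) /\ (forall y, linear (fun x => b x y)).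
Definition trilinear_map (M : lmodType k) (t : H -> H -> H -> M) : Prop :=
  [/\ forall y z, linear (fun x => t x y z),
      forall x z, linear (fun y => t x y z) &
      forall x y, linear (t x y)].

(* Sweedler sums: a coproduct D : H -> seq (H * H) represents
   Delta(h) = \sum_(p <- D h) p.1 (x) p.2 *)
Definition sw2 (M : zmodType) (D : H -> seq (H * H)) (f : H -> H -> M) (h : H) : M :=
  \sum_(p <- D h) f p.1 p.2.
(* f(h_1, h_2, h_3) computed as (Delta (x) id) Delta(h) *)
Definition sw3 (M : zmodType) (D : H -> seq (H * H)) (f : H -> H -> H -> M) (h : H) : M :=
  \sum_(p <- D h) \sum_(q <- D p.1) f q.1 q.2 p.2.

Definition eps_t (D : H -> seq (H * H)) (eps : H -> k) (h : H) : H :=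
  sw2 D (fun a b => eps (a * h) *: b) 1.
Definition eps_s (D : H -> seq (H * H)) (eps : H -> k) (h : H) : H :=
  sw2 D (fun a b => eps (h * b) *: a) 1.

Record weak_hopf (D : H -> seq (H * H)) (eps : H -> k) (S : H -> H) : Prop := {
  wh_D_lin : forall (M : lmodType k) (b : H -> H -> M), bilinear_map b ->
     forall (c : k) (x y : H), sw2 D b (c *: x + y) = c *: sw2 D b x + sw2 D b y;
  wh_eps_lin : scalar eps;
  wh_S_lin : linear S;
  wh_coassoc : forall (M : lmodType k) (t : H -> H -> H -> M), trilinear_map t ->
     forall h, sw3 D t h = \sum_(p <- D h) \sum_(q <- D p.2) t p.1 q.1 q.2;
  wh_counit_l : forall h, sw2 D (fun a b => eps a *: b) h = h;
  wh_counit_r : forall h, sw2 D (fun a b => eps b *: a) h = h;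
  wh_D_mul : forall (M : lmodType k) (b : H -> H -> M), bilinear_map b ->
     forall x h : H,
       sw2 D b (x * h) = \sum_(p <- D x) \sum_(q <- D h) b (p.1 * q.1) (p.2 * q.2);
  wh_eps_1 : forall x h g : H,
       sw2 D (fun a b => eps (x * a) * eps (b * g)) h = eps (x * h * g);
  wh_eps_2 : forall x h g : H,
       sw2 D (fun a b => eps (x * b) * eps (a * g)) h = eps (x * h * g);
  wh_unit_1 : forall (M : lmodType k) (t : H -> H -> H -> M), trilinear_map t ->
       (* (1 (x) Delta 1)(Delta 1 (x) 1) = Delta^2 1 *)
       \sum_(p <- D 1) \sum_(q <- D 1) t p.1 (q.1 * p.2) q.2 = sw3 D t 1;
  wh_unit_2 : forall (M : lmodType k) (t : H -> H -> H -> M), trilinear_map t ->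
       (* (Delta 1 (x) 1)(1 (x) Delta 1) = Delta^2 1 *)
       \sum_(p <- D 1) \sum_(q <- D 1) t p.1 (p.2 * q.1) q.2 = sw3 D t 1;
  wh_S_t : forall h, sw2 D (fun a b => a * S b) h = eps_t D eps h;
  wh_S_s : forall h, sw2 D (fun a b => S a * b) h = eps_s D eps h;
  wh_S_S : forall h, S h = sw3 D (fun a b c => S a * b * S c) h
}.

Record partial_rep (D : H -> seq (H * H)) (S : H -> H)
    (A : algType k) (pi : H -> A) : Prop := {
  pr_lin : linear pi;
  pr1 : pi 1 = 1;
  pr2 : forall h x, sw2 D (fun a b => pi h * pi a * pi (S b)) x
                  = sw2 D (fun a b => pi (h * a) * pi (S b)) x;
  pr3 : forall h x, sw2 D (fun a b => pi h * pi (S a) * pi b) x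
                  = sw2 D (fun a b => pi (h * S a) * pi b) x;
  pr4 : forall h x, sw2 D (fun a b => pi a * pi (S b) * pi x) h
                  = sw2 D (fun a b => pi a * pi (S b * x)) h;
  pr5 : forall h x, sw2 D (fun a b => pi (S a) * pi b * pi x) h
                  = sw2 D (fun a b => pi (S a) * pi (b * x)) h;
  pr6 : forall h, pi h = sw3 D (fun a b c => pi a * pi (S b) * pi c) h
}.

End WHA.

From HB Require Import structures.
From mathcomp Require Import all_boot all_order all_algebra.
Set Implicit Arguments. Unset Strict Implicit. Unset Printing Implicit Defensive.
Import GRing.Theory.
Local Open Scope ring_scope.

(* Multiplying by an element z of H_t only touches the first tensor leg:
   Delta(z h) = z h_1 (x) h_2, and dually Delta(h w) = h_1 (x) h_2 w for w in H_s.
   Expanding pi(h) = pi(h_1) pi(S h_2) pi(h_3) by (PR6), axioms (PR2) and (PR5)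
   then give pi(z) pi(h) = pi(z h) and pi(h) pi(w) = pi(h w).  For the other two
   identities one writes pi(m) = pi(m 1_1) pi(S 1_2) = pi(S 1_1) pi(1_2 m), which
   holds because S maps H_t into H_s and H_s into H_t, and applies (PR2), (PR5)
   to the factorisations Delta(z) = z 1_1 (x) 1_2 and Delta(w) = 1_1 (x) 1_2 w. *)

Section LinearFun.
Variables (k : fieldType) (U V : lmodType k) (f : U -> V).
Hypothesis f_lin : linear f.

Lemma linear_fun0 : f 0 = 0.
Proof.
apply: (addrI (f 0)); rewrite addr0 -{1}(scale1r (f 0)) -f_lin.
by rewrite scale1r addr0.
Qed.

Lemma linear_funD u v : f (u + v) = f u + f v.
Proof. by have := f_lin 1 u v; rewrite !scale1r. Qed.

Lemma linear_funZ a u : f (a *: u) = a *: f u.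
Proof. by have := f_lin a u 0; rewrite linear_fun0 !addr0. Qed.

Lemma linear_fun_sum I (s : seq I) (F : I -> U) :
  f (\sum_(i <- s) F i) = \sum_(i <- s) f (F i).
Proof.
elim: s => [|x s IHs]; first by rewrite !big_nil linear_fun0.
by rewrite !big_cons linear_funD IHs.
Qed.

End LinearFun.

Section BilinearMap.
Variables (k : fieldType) (H : algType k) (M : lmodType k) (b : H -> H -> M).
Hypothesis b_bilin : bilinear_map b.

Lemma bilinear_mapDl u v w : b (u + v) w = b u w + b v w.
Proof. exact: linear_funD (b_bilin.2 w) u v. Qed.

Lemma bilinear_mapZl c u w : b (c *: u) w = c *: b u w.
Proof. exact: linear_funZ (b_bilin.2 w) c u. Qed.

Lemma bilinear_map_suml I (s : seq I) F w :
  b (\sum_(i <- s) F i) w = \sum_(i <- s) b (F i) w.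
Proof. exact: (linear_fun_sum (b_bilin.2 w) s F). Qed.

Lemma bilinear_mapDr u v w : b w (u + v) = b w u + b w v.
Proof. exact: linear_funD (b_bilin.1 w) u v. Qed.

Lemma bilinear_mapZr c u w : b w (c *: u) = c *: b w u.
Proof. exact: linear_funZ (b_bilin.1 w) c u. Qed.

Lemma bilinear_map_sumr I (s : seq I) F w :
  b w (\sum_(i <- s) F i) = \sum_(i <- s) b w (F i).
Proof. exact: (linear_fun_sum (b_bilin.1 w) s F). Qed.

End BilinearMap.

Section WeakHopf.
Variables (k : fieldType) (H : algType k).
Variables (D : H -> seq (H * H)) (eps : H -> k) (S : H -> H).
Hypothesis HW : weak_hopf D eps S.

Local Notation et := (eps_t D eps).
Local Notation es := (eps_s D eps).

Section Sweedler.
Variables (M : lmodType k) (b : H -> H -> M).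
Hypothesis b_bilin : bilinear_map b.

Lemma sw2_linear : linear (sw2 D b).
Proof. by move=> c x y; apply: (wh_D_lin HW). Qed.

Lemma sw2Z c u : sw2 D b (c *: u) = c *: sw2 D b u.
Proof. exact: linear_funZ sw2_linear c u. Qed.

Lemma sw2_sum I (s : seq I) F :
  sw2 D b (\sum_(i <- s) F i) = \sum_(i <- s) sw2 D b (F i).
Proof. exact: (linear_fun_sum sw2_linear s F). Qed.

End Sweedler.

Lemma epsD u v : eps (u + v) = eps u + eps v.
Proof. exact: linear_funD (wh_eps_lin HW : linear (eps : H -> k^o)) u v. Qed.

Lemma epsZ c u : eps (c *: u) = c * eps u.
Proof. exact: linear_funZ (wh_eps_lin HW : linear (eps : H -> k^o)) c u. Qed.

Lemma antipodeD u v : S (u + v) = S u + S v.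
Proof. exact: linear_funD (wh_S_lin HW) u v. Qed.

Lemma antipodeZ c u : S (c *: u) = c *: S u.
Proof. exact: linear_funZ (wh_S_lin HW) c u. Qed.

Lemma eps_t_linear : linear et.
Proof.
move=> c u v; rewrite /eps_t /sw2.
under eq_bigr do rewrite mulrDr -scalerAr epsD epsZ scalerDl -scalerA.
by rewrite big_split /= scaler_sumr.
Qed.

Lemma eps_s_linear : linear es.
Proof.
move=> c u v; rewrite /eps_s /sw2.
under eq_bigr do rewrite mulrDl -scalerAl epsD epsZ scalerDl -scalerA.
by rewrite big_split /= scaler_sumr.
Qed.

Lemma eps_t1 : et 1 = 1.
Proof. by rewrite -[RHS](wh_counit_l HW); apply: eq_bigr => p _; rewrite mulr1. Qed.

Lemma eps_s1 : es 1 = 1.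
Proof. by rewrite -[RHS](wh_counit_r HW); apply: eq_bigr => p _; rewrite mul1r. Qed.

Ltac bilinear_tac :=
  split=> [?|?] ? ? ? /=;
  by rewrite ?(mulrDr, mulrDl, antipodeD, antipodeZ,
              linear_funD eps_t_linear, linear_funZ eps_t_linear,
              linear_funD eps_s_linear, linear_funZ eps_s_linear,
              =^~ scalerAl, =^~ scalerAr).

Ltac trilinear_tac :=
  split=> ? ? ? ? ? /=;
  by rewrite ?(mulrDr, mulrDl, antipodeD, antipodeZ, =^~ scalerAl, =^~ scalerAr).

(* (id (x) eps (x) id) applied to Delta^2(1) = (1 (x) Delta 1)(Delta 1 (x) 1). *)
Lemma sw2_unit_eps_mid (M : lmodType k) (b : H -> H -> M) : bilinear_map b ->
  \sum_(p <- D 1) \sum_(q <- D 1) eps (q.1 * p.2) *: b p.1 q.2 = sw2 D b 1.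
Proof.
move=> b_bilin; pose t a m c := eps m *: b a c.
have t_trilin : trilinear_map t.
  split=> [y z c u v|x z c u v|x y c u v]; rewrite /t.
  - by rewrite bilinear_mapDl // bilinear_mapZl // scalerDr !scalerA mulrC.
  - by rewrite epsD epsZ scalerDl scalerA.
  - by rewrite bilinear_mapDr // bilinear_mapZr // scalerDr !scalerA mulrC.
rewrite [LHS](wh_unit_1 HW t_trilin); apply: eq_bigr => p _.
rewrite -[in RHS](wh_counit_r HW p.1) bilinear_map_suml //.
by apply: eq_bigr => q _; rewrite bilinear_mapZl.
Qed.

Lemma sw2_unit_eps_t (M : lmodType k) (b : H -> H -> M) : bilinear_map b ->
  sw2 D (fun a c => b a (et c)) 1 = sw2 D b 1.
Proof.
move=> b_bilin; rewrite -[RHS]sw2_unit_eps_mid // /sw2; apply: eq_bigr => p _.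
rewrite bilinear_map_sumr //; apply: eq_bigr => q _.
by rewrite bilinear_mapZr.
Qed.

Lemma sw2_unit_eps_s (M : lmodType k) (b : H -> H -> M) : bilinear_map b ->
  sw2 D (fun a c => b (es a) c) 1 = sw2 D b 1.
Proof.
move=> b_bilin; rewrite -[RHS]sw2_unit_eps_mid // /sw2 exchange_big; apply: eq_bigr => p _.
rewrite bilinear_map_suml //; apply: eq_bigr => q _.
by rewrite bilinear_mapZl.
Qed.

Lemma eps_tE y : et y = \sum_(p <- D 1) eps (p.1 * y) *: p.2.
Proof. by []. Qed.

Lemma eps_sE x : es x = \sum_(p <- D 1) eps (x * p.2) *: p.1.
Proof. by []. Qed.

Section SweedlerEps.
Variables (M : lmodType k) (b : H -> H -> M).
Hypothesis b_bilin : bilinear_map b.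

Lemma bilinear_map_mull z : bilinear_map (fun a c => b (z * a) c).
Proof.
split=> [a|c] r u v /=; last by rewrite mulrDr -scalerAr bilinear_mapDl // bilinear_mapZl.
by rewrite bilinear_mapDr // bilinear_mapZr.
Qed.

Lemma bilinear_map_mulr z : bilinear_map (fun a c => b a (c * z)).
Proof.
split=> [a|c] r u v /=; first by rewrite mulrDl -scalerAl bilinear_mapDr // bilinear_mapZr.
by rewrite bilinear_mapDl // bilinear_mapZl.
Qed.

Lemma sw2_eps_t y : sw2 D b (et y) = sw2 D (fun a c => b (et y * a) c) 1.
Proof.
pose t a m c := eps (a * y) *: b m c.
have t_trilin : trilinear_map t.
  split=> [m z c u v|x z c u v|x m c u v]; rewrite /t.
  - by rewrite mulrDl -scalerAl epsD epsZ scalerDl scalerA.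
  - by rewrite bilinear_mapDl // bilinear_mapZl // scalerDr !scalerA mulrC.
  - by rewrite bilinear_mapDr // bilinear_mapZr // scalerDr !scalerA mulrC.
transitivity (\sum_(p <- D 1) \sum_(q <- D p.2) t p.1 q.1 q.2).
  rewrite eps_tE sw2_sum //; apply: eq_bigr => p _.
  by rewrite sw2Z // scaler_sumr.
rewrite -(wh_coassoc HW t_trilin) -(wh_unit_2 HW t_trilin) exchange_big.
apply: eq_bigr => q _; rewrite eps_tE mulr_suml bilinear_map_suml //.
by apply: eq_bigr => p _; rewrite -scalerAl bilinear_mapZl.
Qed.

Lemma sw2_eps_s x : sw2 D b (es x) = sw2 D (fun a c => b a (c * es x)) 1.
Proof.
pose t a m c := eps (x * c) *: b a m.
have t_trilin : trilinear_map t.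
  split=> [m z c u v|x' z c u v|x' m c u v]; rewrite /t.
  - by rewrite bilinear_mapDl // bilinear_mapZl // scalerDr !scalerA mulrC.
  - by rewrite bilinear_mapDr // bilinear_mapZr // scalerDr !scalerA mulrC.
  - by rewrite mulrDr -scalerAr epsD epsZ scalerDl scalerA.
transitivity (sw3 D t 1).
  rewrite eps_sE sw2_sum //; apply: eq_bigr => p _.
  by rewrite sw2Z // scaler_sumr.
rewrite -(wh_unit_2 HW t_trilin); apply: eq_bigr => p _.
rewrite eps_sE mulr_sumr bilinear_map_sumr //.
by apply: eq_bigr => q _; rewrite -scalerAr bilinear_mapZr.
Qed.

End SweedlerEps.

Section SweedlerEpsMul.
Variables (M : lmodType k) (b : H -> H -> M).
Hypothesis b_bilin : bilinear_map b.

Lemma sw2_eps_t_mul y h :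
  sw2 D b (et y * h) = sw2 D (fun a c => b (et y * a) c) h.
Proof.
pose B u v := \sum_(q <- D h) b (u * q.1) (v * q.2).
have B_bilin : bilinear_map B.
  split=> [u|v] c x x' /=; rewrite /B.
  - under eq_bigr do rewrite mulrDl -scalerAl bilinear_mapDr // bilinear_mapZr //.
    by rewrite big_split scaler_sumr.
  - under eq_bigr do rewrite mulrDl -scalerAl bilinear_mapDl // bilinear_mapZl //.
    by rewrite big_split scaler_sumr.
rewrite (wh_D_mul HW b_bilin) -[in RHS](mul1r h).
rewrite (wh_D_mul HW (bilinear_map_mull b_bilin (et y))).
rewrite [LHS](_ : _ = sw2 D B (et y)) // sw2_eps_t //.
by apply: eq_bigr => p _; apply: eq_bigr => q _; rewrite mulrA.
Qed.

Lemma sw2_mul_eps_s x h :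
  sw2 D b (h * es x) = sw2 D (fun a c => b a (c * es x)) h.
Proof.
pose B u v := \sum_(q <- D h) b (q.1 * u) (q.2 * v).
have B_bilin : bilinear_map B.
  split=> [u|v] c x1 x2 /=; rewrite /B.
  - under eq_bigr do rewrite mulrDr -scalerAr bilinear_mapDr // bilinear_mapZr //.
    by rewrite big_split scaler_sumr.
  - under eq_bigr do rewrite mulrDr -scalerAr bilinear_mapDl // bilinear_mapZl //.
    by rewrite big_split scaler_sumr.
rewrite (wh_D_mul HW b_bilin) -[in RHS](mulr1 h).
rewrite (wh_D_mul HW (bilinear_map_mulr b_bilin (es x))).
rewrite [LHS](_ : _ = sw2 D B (es x)); last by rewrite /sw2 exchange_big.
rewrite sw2_eps_s // /sw2 exchange_big.
by apply: eq_bigr => p _; apply: eq_bigr => q _; rewrite mulrA.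
Qed.

End SweedlerEpsMul.

Lemma antipode_eps_t y : S (et y) = es (et y).
Proof.
have S_trilin : trilinear_map (fun a b c => S a * b * S c) by trilinear_tac.
rewrite (wh_S_S HW) (wh_coassoc HW S_trilin).
transitivity (sw2 D (fun a c => S a * et c) (et y)).
  apply: eq_bigr => p _; rewrite -(wh_S_t HW) /sw2 mulr_sumr.
  by apply: eq_bigr => q _; rewrite mulrA.
rewrite sw2_eps_t; last by bilinear_tac.
rewrite (sw2_unit_eps_t (b := fun a c => S (et y * a) * c)); last by bilinear_tac.
by rewrite -(sw2_eps_t (b := fun a c => S a * c)) ?(wh_S_s HW) //; bilinear_tac.
Qed.

Lemma antipode_eps_s x : S (es x) = et (es x).
Proof.
rewrite (wh_S_S HW).
transitivity (sw2 D (fun a c => es a * S c) (es x)).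
  by apply: eq_bigr => p _; rewrite -(wh_S_s HW) /sw2 mulr_suml.
rewrite sw2_eps_s; last by bilinear_tac.
rewrite (sw2_unit_eps_s (b := fun a c => a * S (c * es x))); last by bilinear_tac.
by rewrite -(sw2_eps_s (b := fun a c => a * S c)) ?(wh_S_t HW) //; bilinear_tac.
Qed.

Section Sweedler3.
Variables (M : lmodType k) (t : H -> H -> H -> M).
Hypothesis t_trilin : trilinear_map t.

Lemma trilinear_map_bilinear12 c : bilinear_map (fun a b => t a b c).
Proof. by case: t_trilin => t1 t2 _; split=> [a|b]; [apply: t2 | apply: t1]. Qed.

Lemma trilinear_map_sw2_bilinear : bilinear_map (fun u c => sw2 D (fun a b => t a b c) u).
Proof.
case: t_trilin => _ _ t3; split=> [u|c].
- move=> r v v'; rewrite /sw2 scaler_sumr -big_split /=.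
  by apply: eq_bigr => p _; apply: t3.
- exact: sw2_linear (trilinear_map_bilinear12 c).
Qed.

Lemma sw3_eps_t_mul y h :
  sw3 D t (et y * h) = sw3 D (fun a b c => t (et y * a) b c) h.
Proof.
transitivity (sw2 D (fun u c => sw2 D (fun a b => t a b c) u) (et y * h)) => //.
rewrite sw2_eps_t_mul; last exact: trilinear_map_sw2_bilinear.
apply: eq_bigr => p _.
by rewrite sw2_eps_t_mul //; apply: trilinear_map_bilinear12.
Qed.

Lemma sw3_mul_eps_s x h :
  sw3 D t (h * es x) = sw3 D (fun a b c => t a b (c * es x)) h.
Proof.
transitivity (sw2 D (fun u c => sw2 D (fun a b => t a b c) u) (h * es x)) => //.
by rewrite sw2_mul_eps_s //; apply: trilinear_map_sw2_bilinear.
Qed.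

End Sweedler3.

Section PartialRep.
Variables (A : algType k) (pi : H -> A).
Hypothesis Hpi : partial_rep D S pi.

Let piD := linear_funD (pr_lin Hpi).
Let piZ := linear_funZ (pr_lin Hpi).

Ltac pi_bilinear_tac :=
  split=> [?|?] ? ? ? /=;
  by rewrite ?(mulrDr, mulrDl, antipodeD, antipodeZ, piD, piZ,
              =^~ scalerAl, =^~ scalerAr).

Ltac pi_trilinear_tac :=
  split=> ? ? ? ? ? /=;
  by rewrite ?(mulrDr, mulrDl, antipodeD, antipodeZ, piD, piZ,
              =^~ scalerAl, =^~ scalerAr).

Lemma pi_eps_t_mul y h : pi (et y) * pi h = pi (et y * h).
Proof.
rewrite [in LHS](pr6 Hpi h) [RHS](pr6 Hpi) sw3_eps_t_mul; last by pi_trilinear_tac.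
rewrite /sw3 mulr_sumr; apply: eq_bigr => p _.
rewrite -!mulr_suml mulrA; congr (_ * _).
have := pr2 Hpi (et y) p.1; rewrite /sw2 => <-.
by rewrite mulr_sumr; apply: eq_bigr => q _; rewrite mulrA.
Qed.

Lemma pi_mul_eps_s x h : pi h * pi (es x) = pi (h * es x).
Proof.
have pi_trilin : trilinear_map (fun a b c => pi a * pi (S b) * pi c).
  by pi_trilinear_tac.
have pi_trilin_w : trilinear_map (fun a b c => pi a * pi (S b) * pi (c * es x)).
  by pi_trilinear_tac.
rewrite [in LHS](pr6 Hpi h) [RHS](pr6 Hpi) sw3_mul_eps_s //.
rewrite !(wh_coassoc HW) // mulr_suml; apply: eq_bigr => p _.
transitivity (pi p.1 * sw2 D (fun a b => pi (S a) * pi b * pi (es x)) p.2).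
  by rewrite /sw2 mulr_suml mulr_sumr; apply: eq_bigr => q _; rewrite !mulrA.
rewrite (pr5 Hpi) /sw2 mulr_sumr.
by apply: eq_bigr => q _; rewrite !mulrA.
Qed.

Lemma pi_mul_comul1_antipode m : sw2 D (fun a c => pi (m * a) * pi (S c)) 1 = pi m.
Proof.
rewrite -(sw2_unit_eps_t (b := fun a c => pi (m * a) * pi (S c))); last by pi_bilinear_tac.
transitivity (sw2 D (fun a c => pi (m * a * S (et c))) 1).
  by apply: eq_bigr => p _; rewrite antipode_eps_t pi_mul_eps_s -antipode_eps_t.
rewrite (sw2_unit_eps_t (b := fun a c => pi (m * a * S c))); last by pi_bilinear_tac.
transitivity (pi (m * sw2 D (fun a c => a * S c) 1)).
  rewrite /sw2 mulr_sumr (linear_fun_sum (pr_lin Hpi)).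
  by apply: eq_bigr => p _; rewrite mulrA.
by rewrite (wh_S_t HW) eps_t1 mulr1.
Qed.

Lemma pi_antipode_comul1_mul m : sw2 D (fun a c => pi (S a) * pi (c * m)) 1 = pi m.
Proof.
rewrite -(sw2_unit_eps_s (b := fun a c => pi (S a) * pi (c * m))); last by pi_bilinear_tac.
transitivity (sw2 D (fun a c => pi (S (es a) * (c * m))) 1).
  by apply: eq_bigr => p _; rewrite antipode_eps_s pi_eps_t_mul -antipode_eps_s.
rewrite (sw2_unit_eps_s (b := fun a c => pi (S a * (c * m)))); last by pi_bilinear_tac.
transitivity (pi (sw2 D (fun a c => S a * c) 1 * m)).
  rewrite /sw2 mulr_suml (linear_fun_sum (pr_lin Hpi)).
  by apply: eq_bigr => p _; rewrite mulrA.
by rewrite (wh_S_s HW) eps_s1 mul1r.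
Qed.

Lemma pi_mul_eps_t y h : pi h * pi (et y) = pi (h * et y).
Proof.
rewrite -(pi_mul_comul1_antipode (et y)) -(pi_mul_comul1_antipode (h * et y)).
rewrite -(sw2_eps_t (b := fun a c => pi a * pi (S c))); last by pi_bilinear_tac.
transitivity (sw2 D (fun a c => pi h * pi a * pi (S c)) (et y)).
  by rewrite /sw2 mulr_sumr; apply: eq_bigr => p _; rewrite mulrA.
rewrite (pr2 Hpi) sw2_eps_t; last by pi_bilinear_tac.
by apply: eq_bigr => p _; rewrite mulrA.
Qed.

Lemma pi_eps_s_mul x h : pi (es x) * pi h = pi (es x * h).
Proof.
rewrite -(pi_antipode_comul1_mul (es x)) -(pi_antipode_comul1_mul (es x * h)).
rewrite -(sw2_eps_s (b := fun a c => pi (S a) * pi c)); last by pi_bilinear_tac.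
transitivity (sw2 D (fun a c => pi (S a) * pi c * pi h) (es x)).
  by rewrite /sw2 mulr_suml.
rewrite (pr5 Hpi) sw2_eps_s; last by pi_bilinear_tac.
by apply: eq_bigr => p _; rewrite mulrA.
Qed.

End PartialRep.

End WeakHopf.

Unset Implicit Arguments.

Theorem proposition3p4 (k : fieldType) (H : algType k)
    (D : H -> seq (H * H)) (eps : H -> k) (S : H -> H)
    (HW : weak_hopf D eps S)
    (A : algType k) (pi : H -> A) (Hpi : partial_rep D S pi)
    (w z : H) (Hw : exists x, w = eps_s D eps x) (Hz : exists y, z = eps_t D eps y) :
  forall h : H,
    [/\ pi w * pi h = pi (w * h),
        pi h * pi z = pi (h * z),
        pi z * pi h = pi (z * h) &
        pi h * pi w = pi (h * w)].
Proof.
move=> h; case: Hw => x ->; case: Hz => y ->; split.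
- exact: (pi_eps_s_mul HW Hpi).
- exact: (pi_mul_eps_t HW Hpi).
- exact: (pi_eps_t_mul HW Hpi).
- exact: (pi_mul_eps_s HW Hpi).
Qed.
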